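(* Let $K$ be a compact line and let $G:K\to\mathbb{R}$ be a regulated function. Then $G$ is the uniform limit of step functions. In particular, $G$ is Borel measurable.
   Context: A compact line is a compact space $K$ whose topology is the order topology of a linear order on $K$; $0_K$ and $1_K$ denote its minimum and maximum, and $0_K<1_K$. A point $x\in(0_K,1_K]$ is left-dense if it has no immediate predecessor; $x\in[0_K,1_K)$ is right-dense if it has no immediate successor. $G:K\to\mathbb{R}$ is regulated if for every left-dense $x$ the limit $\lim_{y\nearrow x}G(y)$ exists, and for every right-dense $x$, $\lim_{y\searrow x}G(y)=G(x)$. A function $S:K\to\mathbb{R}$ is a step function if there are points $0_K=s_0<s_1<\cdots<s_n=1_K$ such that $S$ is constant on each open interval $(s_{k-1},s_k)$, $k=1,\dots,n$. *)

From HB Require Import structures.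
From mathcomp Require Import all_boot all_order all_algebra.
From mathcomp Require Import all_classical all_reals all_analysis.
Set Implicit Arguments. Unset Strict Implicit. Unset Printing Implicit Defensive.
Import Order.TTheory GRing.Theory Num.Theory numFieldNormedType.Exports.
Local Open Scope classical_set_scope.
Local Open Scope ring_scope.

Definition compact_line {d} (K : orderTopologicalType d) : Prop :=
  compact [set: K] /\ exists x y : K, (x < y)%O.

Definition imm_pred {d} {K : orderTopologicalType d} (y x : K) : Prop :=
  (y < x)%O /\ ~ (exists z : K, (y < z)%O /\ (z < x)%O).

Definition left_dense {d} {K : orderTopologicalType d} (x : K) : Prop :=
  (exists y : K, (y < x)%O) /\ ~ (exists y : K, imm_pred y x).

Definition right_dense {d} {K : orderTopologicalType d} (x : K) : Prop :=
  (exists y : K, (x < y)%O) /\ ~ (exists y : K, imm_pred x y).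

Definition regulated {d} {K : orderTopologicalType d} {R : realType}
  (G : K -> R) : Prop :=
  (forall x : K, left_dense x ->
     exists l : R, G @ within [set y | (y < x)%O] (nbhs x) --> l) /\
  (forall x : K, right_dense x ->
     G @ within [set y | (x < y)%O] (nbhs x) --> G x).

(* Step function: points 0_K = a = s_0 < s_1 < ... < s_n = 1_K (the list
   a :: s), with S constant on each open interval (s_{k-1}, s_k). *)
Definition step_fun {d} {K : orderTopologicalType d} {R : realType}
  (S : K -> R) : Prop :=
  exists (a : K) (s : seq K),
    sorted (fun u v => (u < v)%O) (a :: s) /\
    (forall x : K, (a <= x)%O) /\
    (forall x : K, (x <= last a s)%O) /\
    forall k : nat, (k < size s)%N ->
      exists c : R, forall x : K,
        (nth a (a :: s) k < x)%O -> (x < nth a (a :: s) k.+1)%O -> S x = c.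

Definition borel_set {d} {K : orderTopologicalType d} (A : set K) : Prop :=
  <<s [set U : set K | open U] >> A.

Definition borel_measurable {d} {K : orderTopologicalType d} {R : realType}
  (G : K -> R) : Prop :=
  forall B : set R, measurable B -> borel_set (G @^-1` B).

From HB Require Import structures.
From mathcomp Require Import all_boot all_order all_algebra.
From mathcomp Require Import all_classical all_reals all_analysis.
Import Order.TTheory GRing.Theory Num.Theory numFieldNormedType.Exports.
Local Open Scope classical_set_scope.
Local Open Scope ring_scope.
Set Implicit Arguments. Unset Strict Implicit. Unset Printing Implicit Defensive.

(* Fix e > 0.  At each x, regularity gives an open interval around x on whose
   left part G stays e-close to a constant (its left limit, or anything if x
   has an immediate predecessor) and on whose right part G stays e-close to
   G x; the interval is unbounded on a side only at an end point of K.
   Compactness picks finitely many such windows.  Their centres and end points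
   cut K into finitely many open cells, each lying on one side of some centre,
   so G oscillates by less than 2e on every cell: keeping G at the nodes and
   freezing it on each cell gives a step function within 2e of G.  Step
   functions are Borel (cells are open intervals, nodes are closed points),
   hence so is their pointwise limit G. *)

Section OrderTopology.
Context {d : Order.disp_t} {K : orderTopologicalType d}.
Local Open Scope order_scope.

Lemma nbhs_left_itv (x : K) (P : set K) : (exists y, y < x) -> nbhs x P ->
  exists2 a, a < x & forall y, a < y -> y <= x -> P y.
Proof.
move=> [y0 y0x]; rewrite itv_nbhsE => -[[l u] [oe]].
rewrite itv_boundlr => /andP[lx xu] sub.
have Pl y : l <= BLeft y -> y <= x -> P y.
  move=> ly yx; apply: sub; rewrite /= itv_boundlr ly /=.
  by apply: le_trans xu; rewrite bnd_simp.
clear sub; case: l oe lx Pl => [b a|b] oe lx Pl.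
  rewrite (itv_open_ends_lside oe) bnd_simp in lx Pl.
  by exists a => // y ay; apply: Pl; rewrite bnd_simp.
by exists y0 => // y _; apply: Pl; rewrite (itv_open_ends_linfty oe).
Qed.

Lemma nbhs_right_itv (x : K) (P : set K) : (exists y, x < y) -> nbhs x P ->
  exists2 b, x < b & forall y, x <= y -> y < b -> P y.
Proof.
move=> [y0 xy0]; rewrite itv_nbhsE => -[[l u] [oe]].
rewrite itv_boundlr => /andP[lx xu] sub.
have Pu y : BRight y <= u -> x <= y -> P y.
  move=> yu xy; apply: sub; rewrite /= itv_boundlr yu andbT.
  by apply: le_trans lx _; rewrite bnd_simp.
clear sub; case: u oe xu Pu => [b a|b] oe xu Pu.
  rewrite (itv_open_ends_rside oe) bnd_simp in xu Pu.
  by exists a => // y xy ya; apply: Pu; rewrite ?bnd_simp.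
by exists y0 => // y xy _; apply: Pu; rewrite ?(itv_open_ends_rinfty oe).
Qed.

End OrderTopology.

Section Nodes.
Context {d : Order.disp_t} {T : orderType d}.
Local Open Scope order_scope.
Implicit Types (a p z : T) (s : seq T).

Local Notation node a s k := (nth a (a :: s) k).

Lemma head_le_node a s p : sorted <%O (a :: s) -> p \in a :: s -> a <= p.
Proof.
move=> sorted_as; rewrite inE => /orP[/eqP->//|ps].
by have /allP := order_path_min lt_trans sorted_as; move/(_ p ps)/ltW.
Qed.

Lemma node_le_last a s p : sorted <%O (a :: s) -> p \in a :: s -> p <= last a s.
Proof.
move=> sorted_as ps; rewrite (last_nth a) -(nth_index a ps).
by rewrite (lt_sorted_leq_nth a sorted_as) ?inE ?index_mem // -ltnS index_mem.
Qed.

Lemma node_outside_gap a s k p :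
  sorted <%O (a :: s) -> (k < size s)%N -> p \in a :: s ->
  p <= node a s k \/ node a s k.+1 <= p.
Proof.
move=> sorted_as ks ps; rewrite -(nth_index a ps).
have leq_node i j : (i < size (a :: s))%N -> (j < size (a :: s))%N ->
    (node a s i <= node a s j) = (i <= j)%N.
  by move=> ? ?; apply: lt_sorted_leq_nth.
have pi : (index p (a :: s) < size (a :: s))%N by rewrite index_mem.
case: (leqP (index p (a :: s)) k) => ik.
  by left; rewrite leq_node //= ltnS ltnW.
by right; rewrite leq_node.
Qed.

Lemma node_or_gap a s z : sorted <%O (a :: s) -> a <= z -> z <= last a s ->
  z \in a :: s \/ exists2 k, (k < size s)%N & node a s k < z < node a s k.+1.
Proof.
elim: s a => [|b t IH] c /= sorted_ct cz zl.
  by left; rewrite inE eq_le cz zl.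
move/andP: sorted_ct => [cb sorted_bt].
have [->|zc] := eqVneq z c; first by left; rewrite mem_head.
have [zb|bz] := ltP z b.
  by right; exists 0%N => //; rewrite zb andbT lt_neqAle eq_sym zc cz.
case: (IH b sorted_bt bz zl) => [zbt|[k kt gap]].
  by left; rewrite inE zbt orbT.
by right; exists k.+1; rewrite /= ?(set_nth_default b c) // ltnS ltnW.
Qed.

End Nodes.

Section Cells.
Context {d : Order.disp_t} {K : orderTopologicalType d} {R : realType}.
Local Open Scope order_scope.
Implicit Types (a p x y z w : K) (s t : seq K) (G : K -> R).

Local Notation node a s k := (nth a (a :: s) k).

Definition cell t z : set K :=
  [set w | w \notin t /\ forall p, p \in t -> (p < z) = (p < w)].

Lemma gap_notin_nodes a s k z : sorted <%O (a :: s) -> (k < size s)%N ->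
  node a s k < z < node a s k.+1 -> z \notin a :: s.
Proof.
move=> sorted_as ks /andP[kz zk]; apply/negP.
move=> /(node_outside_gap sorted_as ks) [zk'|kz'].
  by move: (lt_le_trans kz zk'); rewrite ltxx.
by move: (lt_le_trans zk kz'); rewrite ltxx.
Qed.

Lemma gap_node_ltE a s k z p : sorted <%O (a :: s) -> (k < size s)%N ->
  node a s k < z < node a s k.+1 -> p \in a :: s -> (p < z) = (p <= node a s k).
Proof.
move=> sorted_as ks /andP[kz zk] /(node_outside_gap sorted_as ks) [pk|kp].
  by rewrite pk (le_lt_trans pk kz).
have pz : z < p := lt_le_trans zk kp.
by rewrite (lt_gtF pz) (lt_geF (lt_trans kz pz)).
Qed.

Lemma cell_gapE a s k x y : sorted <%O (a :: s) -> (k < size s)%N ->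
  node a s k < x < node a s k.+1 -> node a s k < y < node a s k.+1 ->
  cell (a :: s) x = cell (a :: s) y.
Proof.
move=> sorted_as ks gap_x gap_y.
apply/seteqP; split => w [wt wE]; split => // p pt;
  by rewrite -wE // (gap_node_ltE sorted_as ks gap_x) //
             (gap_node_ltE sorted_as ks gap_y).
Qed.

Definition cell_step G t x0 z : R :=
  if z \in t then G z else G (xget x0 (cell t z)).

Lemma step_fun_cell_step G a s : sorted <%O (a :: s) ->
  (forall z, a <= z) -> (forall z, z <= last a s) ->
  step_fun (cell_step G (a :: s) a).
Proof.
move=> sorted_as amin lmax; exists a, s; do 3!split => //; move=> k ks.
have [[x0 gap_x0]|no_gap] := pselect (exists x0, node a s k < x0 < node a s k.+1).
  exists (cell_step G (a :: s) a x0) => x kx xk.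
  have gap_x : node a s k < x < node a s k.+1 by rewrite kx xk.
  rewrite /cell_step (cell_gapE sorted_as ks gap_x gap_x0).
  by rewrite (negbTE (gap_notin_nodes sorted_as ks gap_x))
     (negbTE (gap_notin_nodes sorted_as ks gap_x0)).
by exists 0%R => x kx xk; case: no_gap; exists x; rewrite kx xk.
Qed.

Lemma cell_gt p z w t : p \in t -> p < z -> cell t z w -> p < w.
Proof. by move=> pt pz [_ wE]; rewrite -wE. Qed.

Lemma cell_lt p z w t : p \in t -> z < p -> cell t z w -> w < p.
Proof.
move=> pt zp [wt wE]; rewrite lt_neqAle leNgt -wE // (lt_gtF zp) andbT.
by apply: contraNneq wt => ->.
Qed.

Lemma cell_step_approx G t x0 (e : R) : (0 < e)%R ->
  (forall z, z \notin t -> exists c, forall w, cell t z w -> (`|G w - c| < e)%R) ->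
  forall z, (`|G z - cell_step G t x0 z| < e + e)%R.
Proof.
move=> e_gt0 cell_osc z; rewrite /cell_step; case: ifPn => zt.
  by rewrite subrr normr0 addr_gt0.
have [c Gc] := cell_osc z zt.
have cell_z_z : cell t z z by split.
have /Gc Gw : cell t z (xget x0 (cell t z)) by apply: xgetPex; exists z.
rewrite -(subrK c (G z)) -addrA; apply: le_lt_trans (ler_normD _ _) _.
by rewrite ltrD // ?Gc // distrC.
Qed.

End Cells.

Section Windows.
Context {d : Order.disp_t} {K : orderTopologicalType d} {R : realType}.
Local Open Scope order_scope.
Implicit Types (x y z : K) (G : K -> R) (e : R).

Definition above (a : option K) y : Prop := if a is Some a then a < y else True.
Definition below (b : option K) y : Prop := if b is Some b then y < b else True.

Record window := Window { lo : option K; hi : option K; left_lim : R }.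

Definition in_window (w : window) y := above (lo w) y /\ below (hi w) y.

Definition good_window G e x (w : window) := [/\ in_window w x,
  lo w = None -> forall y, ~ y < x, hi w = None -> forall y, ~ x < y,
  forall y, above (lo w) y -> y < x -> (`|G y - left_lim w| < e)%R &
  forall y, below (hi w) y -> x < y -> (`|G y - G x| < e)%R].

Lemma regulated_left_window G e x : regulated G -> (0 < e)%R ->
  exists a c, [/\ above a x, a = None -> forall y, ~ y < x &
                  forall y, above a y -> y < x -> (`|G y - c| < e)%R].
Proof.
move=> [G_left _] e_gt0.
have [x_not_min|x_min] := pselect (exists y, y < x); last first.
  by exists None, 0%R; split => // [_ y yx|y _ yx]; case: x_min; exists y.
have [[p [px no_between]]|no_pred] := pselect (exists p, imm_pred p x).
  by exists (Some p), 0%R; split => // y py yx; case: no_between; exists y.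
have [l /cvgrPdist_lt /(_ e e_gt0)] := G_left x (conj x_not_min no_pred).
rewrite near_withinE => /(nbhs_left_itv x_not_min) [a ax near_l].
by exists (Some a), l; split => // y ay yx; rewrite distrC near_l // ltW.
Qed.

Lemma regulated_right_window G e x : regulated G -> (0 < e)%R ->
  exists b, [/\ below b x, b = None -> forall y, ~ x < y &
               forall y, below b y -> x < y -> (`|G y - G x| < e)%R].
Proof.
move=> [_ G_right] e_gt0.
have [x_not_max|x_max] := pselect (exists y, x < y); last first.
  by exists None; split => // [_ y xy|y _ xy]; case: x_max; exists y.
have [[p [xp no_between]]|no_succ] := pselect (exists p, imm_pred x p).
  by exists (Some p); split => // y yp xy; case: no_between; exists y.
have /cvgrPdist_lt /(_ e e_gt0) := G_right x (conj x_not_max no_succ).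
rewrite near_withinE => /(nbhs_right_itv x_not_max) [b xb near_Gx].
by exists (Some b); split => // y yb xy; rewrite distrC near_Gx // ltW.
Qed.

Lemma regulated_good_window G e x : regulated G -> (0 < e)%R ->
  exists w, good_window G e x w.
Proof.
move=> rG e_gt0.
have [a [c [xa a_min Gc]]] := regulated_left_window x rG e_gt0.
have [b [xb b_max Gb]] := regulated_right_window x rG e_gt0.
by exists (Window a b c).
Qed.

Lemma open_in_window (w : window) : open (in_window w).
Proof.
apply: openI.
  case: (lo w) => [a|] /=; last exact: openT.
  by have := rray_open a; rewrite set_itvE.
case: (hi w) => [b|] /=; last exact: openT.
by have := lray_open b; rewrite set_itvE.
Qed.

Section WindowCover.
Variables (G : K -> R) (e : R) (wd : K -> window) (xs t : seq K).
Hypothesis wd_good : forall x, good_window G e x (wd x).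
Hypothesis xs_cover : forall z, exists2 x, x \in xs & in_window (wd x) z.
Hypothesis centre_node : {subset xs <= t}.
Hypothesis lo_node : forall x a, x \in xs -> lo (wd x) = Some a -> a \in t.
Hypothesis hi_node : forall x b, x \in xs -> hi (wd x) = Some b -> b \in t.

Lemma exists_node_le z : exists2 p, p \in t & p <= z.
Proof.
have [x xs_x [z_lo _]] := xs_cover z.
have [zx|xz] := ltP z x; last by exists x; rewrite ?centre_node.
case: (wd_good x) => _ lo_none _ _ _.
move: z_lo lo_none; case E: (lo (wd x)) => [a|] /= az; last by move/(_ erefl z zx).
by exists a; [apply: lo_node E|apply: ltW].
Qed.

Lemma exists_node_ge z : exists2 p, p \in t & z <= p.
Proof.
have [x xs_x [_ z_hi]] := xs_cover z.
have [xz|zx] := ltP x z; last by exists x; rewrite ?centre_node.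
case: (wd_good x) => _ _ hi_none _ _.
move: z_hi hi_none; case E: (hi (wd x)) => [b|] /= zb; last by move/(_ erefl z xz).
by exists b; [apply: hi_node E|apply: ltW].
Qed.

Lemma cell_oscillation z : z \notin t ->
  exists c, forall w, cell t z w -> (`|G w - c| < e)%R.
Proof.
move=> zt; have [x xs_x [z_lo z_hi]] := xs_cover z.
have xt := centre_node xs_x.
case: (wd_good x) => _ _ _ G_left G_right.
case: (ltgtP z x) => [zx|xz|zx]; last by move: zt; rewrite zx xt.
  exists (left_lim (wd x)) => w zw; apply: G_left; last exact: cell_lt zw.
  move: z_lo; case E: (lo (wd x)) => [a|] //= az.
  exact: cell_gt (lo_node xs_x E) az zw.
exists (G x) => w zw; apply: G_right; last exact: cell_gt zw.
move: z_hi; case E: (hi (wd x)) => [b|] //= zb.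
exact: cell_lt (hi_node xs_x E) zb zw.
Qed.

End WindowCover.
End Windows.

(* The library's finite subcovers and generated sigma-algebras live on pointed
   types, whereas K carries no distinguished point. *)
Definition pointed_at {d} {K : orderTopologicalType d} (x : K) : Type := K.
HB.instance Definition _ {d} (K : orderTopologicalType d) (x : K) :=
  Choice.on (pointed_at x).
HB.instance Definition _ {d} (K : orderTopologicalType d) (x : K) :=
  isPointed.Build (pointed_at x) x.
HB.instance Definition _ {d} (K : orderTopologicalType d) (x : K) :=
  Topological.on (pointed_at x).

Lemma compact_finite_cover {d} {K : orderTopologicalType d} (U : K -> set K) :
  compact [set: K] -> (forall x, open (U x)) -> (forall x, U x x) ->
  exists xs : seq K, forall z, exists2 x, x \in xs & U x z.
Proof.
move=> cK oU Uxx.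
have [[x0 _]|K_empty] := pselect (exists x0 : K, True); last first.
  by exists [::] => z; case: K_empty; exists z.
have : cover_compact (T := pointed_at x0) [set: K] by rewrite -compact_cover.
move=> /(_ K setT U (fun x _ => oU x)) [z _|D _ D_cover]; first by exists z.
by exists (finmap.enum_fset D) => z; have [x] := D_cover z I; exists x.
Qed.

Section Approximation.
Context {d : Order.disp_t} {K : orderTopologicalType d} {R : realType}.
Local Open Scope order_scope.

Lemma regulated_step_approx (G : K -> R) (e : R) :
  compact_line K -> regulated G -> (0 < e)%R ->
  exists S, step_fun S /\ forall x, (`|G x - S x| < e)%R.
Proof.
move=> [cK [u _]] rG e_gt0.
have e2_gt0 : (0 < e / 2)%R by rewrite divr_gt0.
have /choice [wd wd_good] := fun x => regulated_good_window x rG e2_gt0.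
have [xs xs_cover] := compact_finite_cover cK (fun x => open_in_window (wd x))
  (fun x => let: And5 x_in _ _ _ _ := wd_good x in x_in).
pose t := sort <=%O (undup (xs ++ pmap (lo \o wd) xs ++ pmap (hi \o wd) xs)).
have sorted_t : sorted <%O t by rewrite sort_lt_sorted undup_uniq.
have mem_t p : (p \in t) = (p \in xs ++ pmap (lo \o wd) xs ++ pmap (hi \o wd) xs).
  by rewrite mem_sort mem_undup.
have centre_node : {subset xs <= t} by move=> x xs_x; rewrite mem_t mem_cat xs_x.
have lo_node x a : x \in xs -> lo (wd x) = Some a -> a \in t.
  by move=> xs_x E; rewrite mem_t !mem_cat mem_pmap -E map_f ?orbT.
have hi_node x b : x \in xs -> hi (wd x) = Some b -> b \in t.
  by move=> xs_x E; rewrite mem_t !mem_cat (mem_pmap (hi \o wd)) -E map_f ?orbT.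
have [a [s t_as]] : exists a s, t = a :: s.
  by have [x /centre_node] := xs_cover u; case: (t) => // a s _; exists a, s.
rewrite t_as in sorted_t centre_node lo_node hi_node.
exists (cell_step G (a :: s) a); split.
  apply: step_fun_cell_step => // z.
    have [p pt pz] := exists_node_le wd_good xs_cover centre_node lo_node z.
    exact: le_trans (head_le_node sorted_t pt) pz.
  have [p pt zp] := exists_node_ge wd_good xs_cover centre_node hi_node z.
  exact: le_trans zp (node_le_last sorted_t pt).
move=> x; rewrite [e]splitr; apply: cell_step_approx => // z.
exact: cell_oscillation wd_good xs_cover centre_node lo_node hi_node z.
Qed.

End Approximation.

Section Borel.
Context {d : Order.disp_t} {K : orderTopologicalType d} {R : realType}.

Local Notation borel_space x :=
  (g_sigma_algebraType (T := pointed_at x) [set U : set K | open U]).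

Lemma borel_set0 : borel_set (set0 : set K).
Proof. exact: sigma_algebra0. Qed.

Lemma borel_set_closed (A : set K) : closed A -> borel_set A.
Proof.
move=> cA; rewrite -[A]setCK -setTD; apply: sigma_algebraCD.
by apply: sub_sigma_algebra; exact: closed_openC.
Qed.

Lemma borel_set1 (p : K) : borel_set [set p].
Proof.
apply: borel_set_closed.
exact/accessible_closed_set1/hausdorff_accessible/order_hausdorff.
Qed.

Lemma borel_set_itv (p q : K) : borel_set `]p, q[%classic.
Proof. by apply: sub_sigma_algebra; exact: itv_open. Qed.

Lemma borel_setI_preimage_const (X : set K) (S : K -> R) (c : R) (A : set R) :
  borel_set X -> (forall x, X x -> S x = c) -> borel_set (X `&` S @^-1` A).
Proof.
move=> bX Sc; have [Ac|nAc] := pselect (A c).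
  by rewrite setIidl // => x Xx; rewrite /preimage /= Sc.
suff -> : X `&` S @^-1` A = set0 by exact: borel_set0.
by apply/seteqP; split => // x [Xx]; rewrite /preimage /= Sc.
Qed.

Lemma step_fun_borel_measurable (S : K -> R) : step_fun S -> borel_measurable S.
Proof.
move=> [a [s [sorted_as [amin [lmax S_const]]]]] A _.
pose node k := nth a (a :: s) k.
have -> : S @^-1` A =
    \bigcup_(k in [set k | (k < size (a :: s))%N])
       ([set node k] `&` S @^-1` A) `|`
    \bigcup_(k in [set k | (k < size s)%N])
       (`]node k, node k.+1[%classic `&` S @^-1` A).
  apply/seteqP; split => [z Az|z [] [k _ []] //].
  case: (node_or_gap sorted_as (amin z) (lmax z)) => [zt|[k ks gap]].
    left; exists (index z (a :: s)); first by rewrite /mkset index_mem.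
    by split; rewrite // /node nth_index.
  by right; exists k => //; split; rewrite /= ?in_itv.
apply: (@measurableU _ (borel_space a)); apply: bigcup_measurable => k /= ks.
  by apply: borel_setI_preimage_const (borel_set1 _) _ => x ->.
have [c Sc] := S_const k ks.
apply: borel_setI_preimage_const (borel_set_itv _ _) _ => x.
by rewrite /= in_itv /= => /andP[]; apply: Sc.
Qed.

Lemma borel_measurable_cvg (S : nat -> K -> R) (G : K -> R) :
  (forall n, borel_measurable (S n)) -> (forall x, S ^~ x @ \oo --> G x) ->
  borel_measurable G.
Proof.
move=> S_meas S_G B mB.
have [[x0 _]|K_empty] := pselect (exists x0 : K, True); last first.
  suff -> : G @^-1` B = set0 by exact: borel_set0.
  by apply/seteqP; split => // x; case: K_empty; exists x.
have : measurable_fun [set: borel_space x0] G.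
  apply: (@measurable_realfun.measurable_fun_cvg _ (borel_space x0) R setT S).
    by move=> n _ Y mY; rewrite setTI; apply: S_meas.
  by move=> x _; apply: S_G.
by move=> /(_ measurableT B mB); rewrite setTI.
Qed.

End Borel.

Theorem lemma4p2 (d : Order.disp_t) (K : orderTopologicalType d) (R : realType)
  (G : K -> R) :
  compact_line K -> regulated G ->
  (exists S : nat -> K -> R,
     (forall n, step_fun (S n)) /\
     (forall e : R, 0 < e ->
        \forall n \near \oo, forall x : K, `|G x - S n x| < e)) /\
  borel_measurable G.
Proof.
move=> cK rG.
have /choice [S S_approx] : forall n : nat, exists S : K -> R,
    step_fun S /\ forall x, `|G x - S x| < n.+1%:R^-1.
  by move=> n; apply: regulated_step_approx; rewrite ?invr_gt0.
have S_unif e : 0 < e -> \forall n \near \oo, forall x, `|G x - S n x| < e.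
  move=> e_gt0; apply: filterS (near_infty_natSinv_lt (PosNum e_gt0)) => n /= n_e x.
  exact: lt_trans (proj2 (S_approx n) x) n_e.
split; first by exists S; split => // n; case: (S_approx n).
apply: (borel_measurable_cvg (S := S)) => [n|x].
  by apply: step_fun_borel_measurable; case: (S_approx n).
by apply/cvgrPdist_lt => e e_gt0; apply: filterS (S_unif e e_gt0) => n; apply.
Qed.
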